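(* Let $n\ge0$ and $k\ge1$ be integers, let $n=n_1+\dots+n_k$ with integers $n_i\ge0$, and let $m\ge n+k-1$. Then \[ \binom{m}{n}=\sum_{j=0}^{k-1}(-1)^j\binom{k-1}{j}\sum_{\substack{m_1+\dots+m_k=m-j\\ m_i\ge n_i}}\ \prod_{i=1}^{k}\binom{m_i}{n_i}. \] *)

From mathcomp Require Import all_boot all_order all_algebra.
Set Implicit Arguments. Unset Strict Implicit. Unset Printing Implicit Defensive.

From mathcomp Require Import all_boot all_order all_algebra.
From mathcomp Require Import zify.
Import GRing.Theory.
Local Open Scope ring_scope.

(* Write k = K.+1, so that n = n_1 + ... + n_k.  For the truncated series
        B_c = \sum_(a <= m) 'C(a, c) X^a,
      the inner sum over (m_1, ..., m_k) with total t is the t-th coefficient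
      of B_(n_1) * ... * B_(n_k): expanding the product distributes over all
      finite functions 'I_k -> 'I_m.+1, and the terms with some m_i < n_i
      vanish anyway.
   2. Coefficient of the product.  For t <= m the truncation is invisible and
      iterating the upper-index Vandermonde convolution
        \sum_(a <= t) 'C(a + s, p + s) 'C(t - a, q) = 'C(t + s + 1, p + q + s + 1)
      gives the closed form 'C(t + K, n + K).
   3. Finite differences.  Applying the K-th backward difference to
      j |-> 'C(m + K - j, n + K) undoes K Pascal steps:
        \sum_(j <= K) (-1)^j 'C(K, j) 'C(m + K - j, n + K) = 'C(m, n).
   With t = m - j the right-hand side of the theorem becomes the sum in 3.;
   the hypothesis m >= n + k - 1 is needed only to guarantee j <= m, so that
   (m - j) + K = (m + K) - j in truncated subtraction. *)

Lemma alternating_sum_binS (R : pzRingType) (K : nat) (g : nat -> R) :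
  \sum_(j < K.+2) (-1) ^+ j * ('C(K.+1, j))%:R * g j =
  \sum_(j < K.+1) (-1) ^+ j * ('C(K, j))%:R * (g j - g j.+1).
Proof.
rewrite big_ord_recl /=.
under eq_bigr do rewrite /bump /= add1n binS natrD mulrDr mulrDl.
rewrite big_split /=.
have shifted : \sum_(j < K.+1) (-1) ^+ j * ('C(K, j))%:R * g j =
    g 0 + \sum_(j < K.+1) (-1) ^+ j.+1 * ('C(K, j.+1))%:R * g j.+1.
  rewrite big_ord_recl [in RHS]big_ord_recr /= (@bin_small K K.+1) // mulr0n mulr0 mul0r.
  by rewrite addr0 expr0 bin0 !mul1r.
under [in RHS]eq_bigr do rewrite mulrBr.
rewrite sumrB shifted bin0 expr0 !mul1r addrA.
congr (_ + _ + _); rewrite -sumrN; apply: eq_bigr => j _.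
by rewrite exprS !mulN1r !mulNr.
Qed.

(* The K-th finite difference of j |-> 'C(m + K - j, n + K) is 'C(m, n):
   each difference step is one application of Pascal's rule. *)
Lemma alternating_sum_bin (R : pzRingType) (K m n : nat) :
  \sum_(j < K.+1) (-1) ^+ j * ('C(K, j))%:R * ('C(m + K - j, n + K))%:R
  = ('C(m, n))%:R :> R.
Proof.
elim: K => [|K IH].
  by rewrite big_ord1 expr0 mul1r bin0 mul1r !addn0 subn0.
rewrite (alternating_sum_binS _ K (fun j => ('C(m + K.+1 - j, n + K.+1))%:R)).
rewrite -{}IH; apply: eq_bigr => j _; congr (_ * _).
have le_jK : (j <= K)%N by rewrite -ltnS.
have -> : (m + K.+1 - j = (m + K - j).+1)%N by lia.
have -> : (m + K.+1 - j.+1 = m + K - j)%N by lia.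
by rewrite addnS binS natrD addrC addKr.
Qed.

(* Vandermonde's convolution on the upper index, with both lower indices
   shifted by s:  \sum_(a <= t) 'C(a + s, p + s) 'C(t - a, q)
   counts the (p+q+s+1)-subsets of {0, ..., t+s} by their (p+s+1)-th element. *)
Lemma bin_upper_convolution (s p t q : nat) :
  (\sum_(a < t.+1) 'C(a + s, p + s) * 'C(t - a, q) =
   'C(t + s + 1, p + q + s + 1))%N.
Proof.
elim: t q => [|t IH] q.
  rewrite big_ord1 /= add0n sub0n bin0n.
  case: q => [|q] /=; last by rewrite muln0 bin_small //; lia.
  rewrite muln1 addn0 !addn1 binS (@bin_small s (p + s).+1) //; lia.
rewrite big_ord_recr /= subnn.
under eq_bigr => a _ do rewrite /= (subSn (ltnSE (ltn_ord a))).
have -> : (t.+1 + s = t + s + 1)%N by lia.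
case: q => [|q].
  rewrite (eq_bigr (fun a : 'I_t.+1 => 'C(a + s, p + s) * 'C(t - a, 0))) ?IH;
    last by move=> a _; rewrite !bin0.
  by rewrite bin0 muln1 addn0 (addn1 (p + s)) (addn1 (t + s + 1)) binS addnC.
under eq_bigr do rewrite binS mulnDr.
rewrite big_split /= !IH muln0 addn0.
have -> : (p + q.+1 + s + 1 = (p + q + s + 1).+1)%N by lia.
by rewrite (addn1 (t + s + 1)) binS.
Qed.

Definition trunc_bin_poly (m c : nat) : {poly int} :=
  \poly_(a < m.+1) ('C(a, c))%:R.

Lemma coef_prod_trunc_bin_poly (k m t : nat) (ns : 'I_k -> nat) :
  (\prod_(i < k) trunc_bin_poly m (ns i))`_t =
  \sum_(ms : {ffun 'I_k -> 'I_m.+1}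
          | ((\sum_(i < k) (ms i : nat))%N == t) && [forall i, (ns i <= ms i)%N])
     (\prod_(i < k) 'C(ms i, ns i))%:Z.
Proof.
have -> : \prod_(i < k) trunc_bin_poly m (ns i) =
    \prod_(i < k) \sum_(a < m.+1) (('C(a, ns i))%:R)%:P * 'X^a.
  apply: eq_bigr => i _; rewrite /trunc_bin_poly poly_def.
  by apply: eq_bigr => a _; rewrite mul_polyC.
rewrite bigA_distr_bigA /= coef_sum [RHS]big_mkcond /=.
apply: eq_bigr => ms _; rewrite big_split /= prodrXr -rmorph_prod coefCM coefXn.
rewrite -natr_prod natz eq_sym; case: eqP => _ /=; last by rewrite mulr0.
rewrite mulr1; case: ifP => // /forallPn [i]; rewrite -ltnNge => lt_ms_ns.
by rewrite (bigD1 i) //= bin_small.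
Qed.

Lemma coef_prod_trunc_bin_poly_small (K m t : nat) (ns : 'I_K.+1 -> nat) :
  (t <= m)%N ->
  (\prod_(i < K.+1) trunc_bin_poly m (ns i))`_t =
  ('C(t + K, \sum_(i < K.+1) ns i + K))%:R.
Proof.
elim: K ns t => [|K IH] ns t le_tm.
  by rewrite !big_ord1 coef_poly ltnS le_tm !addn0.
rewrite big_ord_recr [in RHS]big_ord_recr /= coefM.
set s := (\sum_(i < K.+1) _)%N.
rewrite (eq_bigr (fun j : 'I_t.+1 => ('C(j + K, s + K) * 'C(t - j, ns ord_max))%:R)).
  by rewrite -natr_sum bin_upper_convolution !addn1 !addnS.
move=> j _; have le_jt : (j <= t)%N by rewrite -ltnS.
rewrite IH ?(leq_trans le_jt) // coef_poly ltnS (leq_trans (leq_subr _ _) le_tm).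
by rewrite natrM.
Qed.

Theorem proposition4p2 (k : nat) (ns : 'I_k -> nat) (n m : nat) :
  (1 <= k)%N ->
  n = (\sum_(i < k) ns i)%N ->
  (n + k - 1 <= m)%N ->
  ('C(m, n))%:Z =
  \sum_(j < k)
     (-1) ^+ j * ('C(k.-1, j))%:Z *
     \sum_(ms : {ffun 'I_k -> 'I_m.+1}
             | ((\sum_(i < k) (ms i : nat))%N == (m - j)%N)
               && [forall i, (ns i <= ms i)%N])
        (\prod_(i < k) 'C(ms i, ns i))%:Z.
Proof.
case: k ns => [|K] ns // _ def_n le_nKm.
rewrite -natz -(alternating_sum_bin _ K m n); apply: eq_bigr => j _.
rewrite -coef_prod_trunc_bin_poly coef_prod_trunc_bin_poly_small ?leq_subr //.
rewrite -def_n !natz.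
have le_jK : (j <= K)%N by rewrite -ltnS.
have le_jm : (j <= m)%N by lia.
by have -> : (m - j + K = m + K - j)%N by lia.
Qed.
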